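(* Let $\Gamma$ be a finite simple graph and $A_\Gamma$ the right-angled Artin group on $\Gamma$, with standard generating set $S=V(\Gamma)^{\pm1}$. Then for $g\in A_\Gamma\smallsetminus\{e\}$, $\kappa(g)=0$ if and only if $g$ is central in $A_\Gamma$; otherwise $\kappa(g)<0$.
   Context: The right-angled Artin group $A_\Gamma$ has generators the vertices of $\Gamma$ and relations $[u,v]=e$ for each edge $\{u,v\}$ of $\Gamma$. For a group with finite generating set $S$ ($S=S^{-1}$, $e\notin S$), $|x|$ is word length, $\mathrm{Av}(g)=\frac{1}{|S|}\sum_{a\in S}|a^{-1}ga|$, and for $g\neq e$ the curvature is $\kappa(g)=\frac{|g|-\mathrm{Av}(g)}{|g|}$. *)

From HB Require Import structures.
From Stdlib Require Import Relations.
From mathcomp Require Import all_boot all_order all_algebra.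
From mathcomp Require Import boolp.
Set Implicit Arguments. Unset Strict Implicit. Unset Printing Implicit Defensive.
Import Order.TTheory GRing.Theory Num.Theory.

Local Open Scope ring_scope.

Section RAAG.
Variable T : finType.
Variable adj : rel T.

(* A letter (x, b) is the generator x if b = true and x^-1 if b = false.
   The standard generating set S = V(Gamma)^{+-1} is the finite type T * bool. *)
Definition letter := (T * bool)%type.
Definition word := seq letter.

Definition linv (a : letter) : letter := (a.1, ~~ a.2).
Definition winv (w : word) : word := rev (map linv w).

Inductive raag_step : word -> word -> Prop :=
| step_cancel u v a : raag_step (u ++ [:: a; linv a] ++ v) (u ++ v)
| step_comm u v a b : adj a.1 b.1 ->
    raag_step (u ++ [:: a; b] ++ v) (u ++ [:: b; a] ++ v).

Definition raag_eq : word -> word -> Prop := clos_refl_sym_trans word raag_step.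

Lemma wlen_ex (w : word) : exists n, `[< exists w', raag_eq w w' /\ size w' = n >].
Proof. exists (size w); apply/asboolP; exists w; split => //; exact: rst_refl. Qed.

Definition wlen (w : word) : nat := ex_minn (wlen_ex w).

Definition Av (w : word) : rat :=
  (#|{: letter}|%:R)^-1 * \sum_(a : letter) (wlen ([:: linv a] ++ w ++ [:: a]))%:R.

Definition kappa (w : word) : rat := ((wlen w)%:R - Av w) / (wlen w)%:R.

Definition central (w : word) : Prop := forall w' : word, raag_eq (w ++ w') (w' ++ w).

End RAAG.

From Stdlib Require Import Relations.
From mathcomp Require Import all_boot all_order all_algebra.
From mathcomp Require Import boolp zify ring.
Import Order.TTheory GRing.Theory Num.Theory.
Set Implicit Arguments. Unset Strict Implicit. Unset Printing Implicit Defensive.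

(* Words are reduced letter by letter: appending a to a reduced word r cancels
   a against a letter a^-1 of r exactly when, for every vertex y not adjacent to
   a.1 (y = a.1 included), the last letter of r on the alphabet {a.1, y} is a^-1;
   otherwise a is appended.  The projections of the reduced word onto pairs of
   non-adjacent vertices only depend on the group element, hence so does its
   length: the reduced word is a geodesic, and multiplying a geodesic by a
   generator on either side changes its length by exactly one.  So
   |a^-1 g a| = |g| +- 1 +- 1, and the cancellations available for a and for
   a^-1 exclude each other enough to give |a^-1 g a| + |a g a^-1| >= 2|g|,
   i.e. kappa(g) <= 0.  Equality for a forces a.1 to come first in every
   projection of the geodesic of g onto a.1 and a non-neighbour; if this holds
   for every generator, all letters of g commute with all generators. *)

Lemma count_rcons (U : Type) (P : pred U) s x : count P (rcons s x) = count P s + P x.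
Proof. by rewrite -cats1 count_cat /= addn0. Qed.

Lemma rcons_split_pair (U : Type) (r s t : seq U) a c d : rcons r a = s ++ [:: c, d & t] ->
  [/\ t = [::], r = rcons s c & a = d] \/ exists2 t', t = rcons t' a & r = s ++ [:: c, d & t'].
Proof.
case/lastP: t => [|t' e] E.
  left; have : rcons r a = rcons (rcons s c) d by rewrite E -!cats1 -catA.
  by move/rcons_inj => [-> ->].
right; have : rcons r a = rcons (s ++ [:: c, d & t']) e by rewrite E rcons_cat.
by move/rcons_inj => [-> ->]; exists t'.
Qed.

Section RAAG.
Variable T : finType.
Variable adj : rel T.
Hypothesis adj_sym : symmetric adj.
Hypothesis adj_irr : irreflexive adj.

Local Notation letter := (letter T).
Local Notation word := (word T).
Local Notation req := (raag_eq adj).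
Local Notation wlen := (wlen adj).

Lemma linvK : involutive (@linv T).
Proof. by case=> x []. Qed.

Lemma linv_neq (a : letter) : linv a != a.
Proof. by case: a => x []; rewrite /linv /= xpair_eqE eqxx. Qed.

Lemma winv_cat (u v : word) : winv (u ++ v) = winv v ++ winv u.
Proof. by rewrite /winv map_cat rev_cat. Qed.

Lemma winvK : involutive (@winv T).
Proof. by move=> w; rewrite /winv map_rev revK -map_comp (eq_map linvK) map_id. Qed.

Lemma size_winv (w : word) : size (winv w) = size w.
Proof. by rewrite /winv size_rev size_map. Qed.

(** * The defining relations *)

Lemma req_refl w : req w w. Proof. exact: rst_refl. Qed.
Lemma req_sym w w' : req w w' -> req w' w. Proof. exact: rst_sym. Qed.
Lemma req_trans w1 w2 w3 : req w1 w2 -> req w2 w3 -> req w1 w3.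
Proof. exact: rst_trans. Qed.
Lemma req_step w w' : raag_step adj w w' -> req w w'.
Proof. exact: rst_step. Qed.

Lemma req_map (f : word -> word) :
  (forall w w', raag_step adj w w' -> raag_step adj (f w) (f w')) ->
  forall w w', req w w' -> req (f w) (f w').
Proof.
move=> f_step w w'; elim=> [x y /f_step/req_step //|x|x y _|x y z _ IH1 _ IH2].
- exact: req_refl.
- exact: req_sym.
- exact: req_trans IH2.
Qed.

Lemma step_ctx u v w w' :
  raag_step adj w w' -> raag_step adj (u ++ w ++ v) (u ++ w' ++ v).
Proof.
case=> [u0 v0 a|u0 v0 a b ab].
- by have := step_cancel adj (u ++ u0) (v0 ++ v) a; rewrite -!catA.
- by have := step_comm (u ++ u0) (v0 ++ v) ab; rewrite -!catA.
Qed.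

Lemma req_ctx u v w w' : req w w' -> req (u ++ w ++ v) (u ++ w' ++ v).
Proof. exact: (@req_map (fun w => u ++ w ++ v) (@step_ctx u v)). Qed.

Lemma req_catl u w w' : req w w' -> req (u ++ w) (u ++ w').
Proof. by move/(req_ctx u [::]); rewrite !cats0. Qed.

Lemma req_catr v w w' : req w w' -> req (w ++ v) (w' ++ v).
Proof. exact: req_ctx [::] v w w'. Qed.

Lemma step_winv w w' : raag_step adj w w' -> raag_step adj (winv w) (winv w').
Proof.
case=> [u v a|u v a b ab]; rewrite !winv_cat -catA.
- by rewrite [winv [:: a; _]]/winv /= linvK; apply: step_cancel.
- by rewrite -catA; apply: step_comm; rewrite /= adj_sym.
Qed.

Lemma req_winv w w' : req w w' -> req (winv w) (winv w').
Proof. exact: (@req_map (@winv T) step_winv). Qed.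

(** * Reduction of words *)

Definition proj (x y : T) (w : word) : word := [seq c <- w | (c.1 == x) || (c.1 == y)].

(* c.s freely shortens: c^-1 is the first c.1-letter of s and all letters
   before it commute with c.1 (the case y = c.1 gives the first part). *)
Definition lcancels (c : letter) (s : word) : bool :=
  [forall y, ~~ adj c.1 y ==> (ohead (proj c.1 y s) == Some (linv c))].

Definition rcancels (r : word) (a : letter) : bool := lcancels a (rev r).

Fixpoint rem_first (x : T) (s : word) : word :=
  if s is c :: s' then (if c.1 == x then s' else c :: rem_first x s') else [::].

Definition rem_last (x : T) (r : word) : word := rev (rem_first x (rev r)).

Definition push (r : word) (a : letter) : word :=
  if rcancels r a then rem_last a.1 r else rcons r a.

Definition reduce (w : word) : word := foldl push [::] w.

Definition same_proj (r r' : word) : Prop :=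
  forall p q, ~~ adj p q -> proj p q r = proj p q r'.

Lemma proj_sym p q w : proj p q w = proj q p w.
Proof. by apply: eq_filter => c; rewrite orbC. Qed.

Lemma proj_rcons p q r a : proj p q (rcons r a) =
  if (a.1 == p) || (a.1 == q) then rcons (proj p q r) a else proj p q r.
Proof. by rewrite /proj filter_rcons. Qed.

Lemma proj_rev p q r : proj p q (rev r) = rev (proj p q r).
Proof. by rewrite /proj filter_rev. Qed.

Lemma proj_winv p q w : proj p q (winv w) = winv (proj p q w).
Proof. by rewrite /proj /winv filter_rev filter_map. Qed.

Lemma rcancelsP r a : reflect
  (forall y, ~~ adj a.1 y -> exists t, proj a.1 y r = rcons t (linv a)) (rcancels r a).
Proof.
apply: (iffP forallP) => [ra y ny | H y]; last first.
  by apply/implyP => /H [t t_eq]; rewrite proj_rev t_eq rev_rcons.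
move/implyP: (ra y) => /(_ ny); rewrite proj_rev.
by case/lastP: (proj a.1 y r) => [|t c]; rewrite ?rev_rcons //= => /eqP [<-]; exists t.
Qed.

Lemma lcancelsP c s : reflect
  (forall y, ~~ adj c.1 y -> exists t, proj c.1 y s = linv c :: t) (lcancels c s).
Proof.
apply: (iffP forallP) => [cs y ny | H y]; last by apply/implyP => /H [t ->].
move/implyP: (cs y) => /(_ ny).
by case: (proj c.1 y s) => [|d t] //= /eqP [->]; exists t.
Qed.

Lemma filter_rem_first_out (P : pred letter) x s :
  (forall d : letter, d.1 = x -> ~~ P d) -> filter P (rem_first x s) = filter P s.
Proof.
move=> nP; elim: s => //= d s IH; case: eqP => [/nP/negbTE -> //|_].
by rewrite /= IH.
Qed.

Lemma filter_rem_first_head (P : pred letter) x s c :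
  (forall d : letter, d.1 = x -> P d) -> c.1 = x -> ohead (filter P s) = Some c ->
  filter P (rem_first x s) = behead (filter P s).
Proof.
move=> xP cx; elim: s => //= d s IH; case: eqP => [/xP -> //|dx] /=.
by case: (P d) => //= -[dc]; case: dx; rewrite dc.
Qed.

Lemma lcancels_split c s : lcancels c s -> exists q p,
  [/\ s = q ++ linv c :: p, rem_first c.1 s = q ++ p & all (fun d : letter => adj c.1 d.1) q].
Proof.
elim: s => [|d s IH] /forallP cs; first by move: (cs c.1); rewrite adj_irr.
have head_d y : ~~ adj c.1 y -> d.1 = y -> d = linv c.
  by move=> ny dy; move: (cs y); rewrite ny /proj /= dy eqxx orbT => /eqP [].
have [dc|ndc] := eqVneq d.1 c.1.
  by exists [::], s; rewrite /= dc eqxx (head_d c.1) ?adj_irr.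
have ad : adj c.1 d.1 by apply: contraNT ndc => /head_d/(_ erefl) ->.
have [|q [p [s_eq rem_eq all_q]]] := IH.
  apply/forallP => y; apply/implyP => ny; move/implyP: (cs y) => /(_ ny).
  have dy : d.1 != y by apply: contraNneq ny => <-.
  by rewrite /proj /= (negbTE ndc) (negbTE dy).
by exists (d :: q), p; rewrite /= (negbTE ndc) ad all_q -s_eq rem_eq.
Qed.

Lemma rcancels_split r a : rcancels r a -> exists q p,
  [/\ r = p ++ linv a :: q, rem_last a.1 r = p ++ q & all (fun d : letter => adj a.1 d.1) q].
Proof.
move/lcancels_split => [q [p [r_eq rem_eq all_q]]].
exists (rev q), (rev p); split; last by rewrite all_rev.
- by rewrite -(revK r) r_eq rev_cat rev_cons cat_rcons.
- by rewrite /rem_last rem_eq rev_cat.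
Qed.

Lemma proj_push_out p q r a :
  ~~ ((a.1 == p) || (a.1 == q)) -> proj p q (push r a) = proj p q r.
Proof.
move=> na; rewrite /push; case: ifP => _; last by rewrite proj_rcons (negbTE na).
rewrite /rem_last proj_rev /proj filter_rem_first_out ?filter_rev ?revK //.
by move=> d ->.
Qed.

Lemma proj_push_rcons p q r a : ~~ rcancels r a -> proj p q (push r a) = proj p q (rcons r a).
Proof. by rewrite /push => /negbTE ->. Qed.

Lemma proj_push_cancel y r a : rcancels r a -> ~~ adj a.1 y ->
  proj a.1 y r = rcons (proj a.1 y (push r a)) (linv a).
Proof.
move=> ra ny; have [t t_eq] := rcancelsP _ _ ra y ny.
have head_r : ohead (proj a.1 y (rev r)) = Some (linv a) by rewrite proj_rev t_eq rev_rcons.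
rewrite /push ra /rem_last proj_rev /proj (filter_rem_first_head _ _ head_r) //.
  by rewrite filter_rev -/(proj a.1 y r) t_eq rev_rcons /= revK.
by move=> d ->; rewrite eqxx.
Qed.

Lemma proj_push_pop p q r a : ~~ adj p q -> rcancels r a -> (a.1 == p) || (a.1 == q) ->
  proj p q r = rcons (proj p q (push r a)) (linv a).
Proof.
move=> npq ra /orP[]/eqP ?; subst; first exact: proj_push_cancel.
by rewrite !(proj_sym p); apply: proj_push_cancel; rewrite // adj_sym.
Qed.

Lemma rcancels_congr s s' a :
  (forall y, ~~ adj a.1 y -> proj a.1 y s = proj a.1 y s') -> rcancels s a = rcancels s' a.
Proof.
move=> E; apply: eq_forallb => y; case: (boolP (adj a.1 y)) => //= ny.
by rewrite !proj_rev E.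
Qed.

Lemma proj_push_congr p q s s' a : ~~ adj p q -> proj p q s = proj p q s' ->
  rcancels s a = rcancels s' a -> proj p q (push s a) = proj p q (push s' a).
Proof.
move=> npq E same_a.
have [ina|outa] := boolP ((a.1 == p) || (a.1 == q)); last by rewrite !proj_push_out.
have [sa|nsa] := boolP (rcancels s a).
- have s'a : rcancels s' a by rewrite -same_a.
  move: (proj_push_pop npq sa ina) (proj_push_pop npq s'a ina).
  by rewrite E => -> /rcons_inj [].
- have ns'a : ~~ rcancels s' a by rewrite -same_a.
  by rewrite !proj_push_rcons // !proj_rcons ina E.
Qed.

Lemma push_same_proj s s' a : same_proj s s' -> same_proj (push s a) (push s' a).
Proof.
move=> E p q npq; apply: proj_push_congr => //; first exact: E.
by apply: rcancels_congr => y; apply: E.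
Qed.

(* The count m of c.1-letters after the factor c c^-1 singles out the same two
   letters of r in every projection. *)
Definition cancel_pair_at (c : letter) (m : nat) (r : word) : Prop :=
  forall y, ~~ adj c.1 y -> exists s t,
    proj c.1 y r = s ++ [:: c, linv c & t] /\ count (fun d : letter => d.1 == c.1) t = m.

Definition no_cancel_pair (r : word) : Prop := forall c m, ~ cancel_pair_at c m r.

Lemma no_cancel_pair_nil : no_cancel_pair [::].
Proof.
move=> c m /(_ c.1); rewrite adj_irr => /(_ isT) [s [t [E _]]].
by case: s E.
Qed.

Lemma cancel_pair_at_pop r a c m : rcancels r a -> cancel_pair_at c m (push r a) ->
  cancel_pair_at c (m + (a.1 == c.1)) r.
Proof.
move=> ra H y ny; have [s [t [E t_m]]] := H y ny.
have [ina|outa] := boolP ((a.1 == c.1) || (a.1 == y)).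
  rewrite (proj_push_pop ny ra ina) E; exists s, (rcons t (linv a)).
  by rewrite rcons_cat count_rcons t_m.
rewrite -(proj_push_out _ outa) E; exists s, t; split => //.
by move: outa; rewrite t_m; case: eqP => //= _ _; rewrite addn0.
Qed.

Lemma cancel_pair_at_rcons r a c m : cancel_pair_at c m (rcons r a) ->
  if (a.1 == c.1) && (m == 0) then is_true (rcancels r a)
  else cancel_pair_at c (m - (a.1 == c.1)) r.
Proof.
move=> H; case: ifP => [/andP[/eqP ac /eqP m0]|not_last].
  apply/rcancelsP; rewrite ac => y ny; have [s [t [E t_m]]] := H y ny.
  rewrite proj_rcons ac eqxx in E.
  case: (rcons_split_pair E) => [[_ r_eq ->]|[t' t_eq _]]; first by exists s; rewrite linvK.
  by move: t_m; rewrite t_eq count_rcons ac eqxx m0 addn1.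
move=> y ny; have [s [t [E t_m]]] := H y ny; rewrite proj_rcons in E.
case: ifP E => [_|outa] E; last first.
  by exists s, t; split=> //; move: outa; rewrite t_m; case: eqP => //= _ _; rewrite subn0.
case: (rcons_split_pair E) => [[t_nil _ a_eq]|[t' t_eq r_eq]].
  by move: not_last; rewrite a_eq -t_m t_nil /= eqxx.
by exists s, t'; rewrite -t_m t_eq count_rcons addnK.
Qed.

Lemma no_cancel_pair_push r a : no_cancel_pair r -> no_cancel_pair (push r a).
Proof.
move=> nr c m; have [ra|nra] := boolP (rcancels r a).
  by move/(cancel_pair_at_pop ra); apply: nr.
rewrite /push (negbTE nra) => /cancel_pair_at_rcons; case: ifP => _; last exact: nr.
by rewrite (negbTE nra).
Qed.

Lemma push_linv_same_proj r a : no_cancel_pair r -> same_proj (push (push r a) (linv a)) r.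
Proof.
move=> nr p q npq.
have [ina|outa] := boolP ((a.1 == p) || (a.1 == q)); last by rewrite !proj_push_out.
have [ra|nra] := boolP (rcancels r a).
  have nra' : ~~ rcancels (push r a) (linv a).
    apply/negP => /rcancelsP ra'; apply: (nr a 0) => y ny.
    have [t t_eq] := ra' y ny; rewrite linvK in t_eq.
    exists t, [::]; split=> //.
    by rewrite (proj_push_cancel ra ny) t_eq -!cats1 -catA.
  by rewrite proj_push_rcons // proj_rcons /= ina -(proj_push_pop npq ra ina).
have ra' : rcancels (push r a) (linv a).
  apply/rcancelsP => y ny; exists (proj a.1 y r).
  by rewrite proj_push_rcons // proj_rcons /= eqxx linvK.
have := proj_push_pop npq ra' ina.
by rewrite proj_push_rcons // proj_rcons ina linvK => /rcons_inj [->].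
Qed.

Lemma adj_nonadj_pair x y p q : adj x y -> ~~ adj p q ->
  (x == p) || (x == q) -> ~~ ((y == p) || (y == q)).
Proof.
move=> xy npq /orP[]/eqP xE; apply/negP => /orP[]/eqP yE; subst;
  first [by rewrite adj_irr in xy | by rewrite xy in npq | by rewrite adj_sym xy in npq].
Qed.

Lemma rcancels_push_adj r a b : adj a.1 b.1 -> rcancels (push r b) a = rcancels r a.
Proof.
move=> ab; apply: rcancels_congr => y ny; apply: proj_push_out.
by apply: (adj_nonadj_pair ab ny); rewrite eqxx.
Qed.

Lemma push_comm r a b : adj a.1 b.1 -> same_proj (push (push r a) b) (push (push r b) a).
Proof.
move=> ab p q npq; have [ina|outa] := boolP ((a.1 == p) || (a.1 == q)).
  have outb := adj_nonadj_pair ab npq ina.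
  rewrite (proj_push_out _ outb); apply: proj_push_congr => //.
  - by rewrite proj_push_out.
  - by rewrite rcancels_push_adj.
rewrite [RHS](proj_push_out _ outa); apply: proj_push_congr => //.
- by rewrite proj_push_out.
- by rewrite rcancels_push_adj // adj_sym.
Qed.

Lemma same_proj_foldl v r r' :
  same_proj r r' -> same_proj (foldl push r v) (foldl push r' v).
Proof. by elim: v r r' => //= a v IH r r' E; apply/IH/push_same_proj. Qed.

Lemma no_cancel_pair_reduce w : no_cancel_pair (reduce w).
Proof.
rewrite /reduce; elim: w [::] no_cancel_pair_nil => //= a w IH r nr.
exact/IH/no_cancel_pair_push.
Qed.

Lemma reduce_rcons w a : reduce (rcons w a) = push (reduce w) a.
Proof. by rewrite /reduce -cats1 foldl_cat. Qed.

Lemma reduce_step w w' : raag_step adj w w' -> same_proj (reduce w) (reduce w').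
Proof.
case=> [u v a|u v a b ab]; rewrite /reduce !foldl_cat; apply: same_proj_foldl.
- exact: push_linv_same_proj (@no_cancel_pair_reduce u).
- exact: push_comm.
Qed.

Lemma reduce_same_proj w w' : req w w' -> same_proj (reduce w) (reduce w').
Proof.
elim=> [x y /reduce_step //|x //|x y _ E p q npq|x y z _ E1 _ E2 p q npq].
- by rewrite E.
- by rewrite E1 ?E2.
Qed.

Lemma size_same_proj r r' : same_proj r r' -> size r = size r'.
Proof.
have size_sum (s : word) : size s = \sum_x size (proj x x s).
  rewrite -sum1_size (partition_big fst xpredT) //; apply: eq_bigr => x _.
  by rewrite sum1_count size_filter; apply: eq_count => c; rewrite orbb.
by move=> E; rewrite !size_sum; apply: eq_bigr => x _; rewrite E ?adj_irr.
Qed.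

(** * Geodesics *)

Lemma req_move_left (u q v : word) a : all (fun d : letter => adj a.1 d.1) q ->
  req (u ++ q ++ a :: v) (u ++ a :: q ++ v).
Proof.
elim: q u => [|d q IH] u /=; first by move=> _; apply: req_refl.
case/andP=> ad all_q; have := IH (rcons u d) all_q; rewrite !cat_rcons => /req_trans; apply.
apply: req_step; rewrite adj_sym in ad.
exact: (step_comm u (q ++ v) ad).
Qed.

Lemma push_req r a : req (push r a) (rcons r a).
Proof.
rewrite /push; case: ifP => ra; last exact: req_refl.
have [q [p [r_eq rem_eq all_q]]] := rcancels_split ra.
rewrite rem_eq r_eq rcons_cat; apply/req_catl/req_sym.
rewrite -cats1; apply: req_trans (req_move_left [:: linv a] [::] all_q) _.
rewrite cats0; apply: req_step.
by have := step_cancel adj [::] q (linv a); rewrite linvK.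
Qed.

Lemma size_push r a : size (push r a) + 2 * rcancels r a = (size r).+1.
Proof.
rewrite /push; case: ifP => ra; last by rewrite size_rcons addn0.
have [q [p [r_eq rem_eq _]]] := rcancels_split ra.
by rewrite rem_eq r_eq !size_cat /=; lia.
Qed.

Lemma size_reduce_le w : size (reduce w) <= size w.
Proof.
elim/last_ind: w => [|w a IH] //; rewrite reduce_rcons size_rcons.
by have := size_push (reduce w) a; lia.
Qed.

Lemma reduce_req w : req (reduce w) w.
Proof.
elim/last_ind: w => [|w a IH]; first exact: req_refl.
rewrite reduce_rcons; apply: req_trans (push_req _ _) _.
by rewrite -!cats1; apply: req_catr.
Qed.

Lemma wlen_le w w' : req w w' -> wlen w <= size w'.
Proof.
move=> ww'; rewrite /wlen; case: ex_minnP => m _; apply.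
by apply/asboolP; exists w'.
Qed.

Lemma wlen_witness w : exists2 w', req w w' & size w' = wlen w.
Proof. by rewrite /wlen; case: ex_minnP => m /asboolP [w' [ww' <-]] _; exists w'. Qed.

Lemma wlenE w : wlen w = size (reduce w).
Proof.
apply/eqP; rewrite eqn_leq wlen_le /=; last exact/req_sym/reduce_req.
have [w' ww' <-] := wlen_witness w.
by rewrite (size_same_proj (reduce_same_proj ww')) size_reduce_le.
Qed.

Lemma wlen_req w w' : req w w' -> wlen w = wlen w'.
Proof. by move=> ww'; rewrite !wlenE; apply/size_same_proj/reduce_same_proj. Qed.

Lemma wlen_gt0 g : ~ req g [::] -> 0 < wlen g.
Proof.
move=> g_ne1; rewrite lt0n; apply/eqP => g0; apply: g_ne1.
by have [w' gw' /eqP] := wlen_witness g; rewrite g0 size_eq0 => /eqP <-.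
Qed.

Lemma reduce_id w : size (reduce w) = size w -> reduce w = w.
Proof.
elim/last_ind: w => [|w a IH] //; rewrite reduce_rcons size_rcons.
have := size_reduce_le w; have := size_push (reduce w) a.
rewrite /push; case: ifP => _ /=; first by lia.
by rewrite size_rcons addn0 => _ le_w [/IH ->].
Qed.

Lemma reduce_idem w : reduce (reduce w) = reduce w.
Proof. by apply: reduce_id; rewrite -wlenE (wlen_req (reduce_req w)) wlenE. Qed.

Lemma reduce_push r a : reduce r = r -> reduce (push r a) = push r a.
Proof.
move=> red_r; apply: reduce_id.
by rewrite -wlenE (wlen_req (push_req r a)) wlenE reduce_rcons red_r.
Qed.

Lemma wlen_winv w : wlen (winv w) = wlen w.
Proof.
have le v : wlen (winv v) <= wlen v.
  by have [v' vv' <-] := wlen_witness v; rewrite -size_winv; apply/wlen_le/req_winv.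
by apply/eqP; rewrite eqn_leq le /= -{1}(winvK w) le.
Qed.

Lemma reduce_winv s : reduce s = s -> reduce (winv s) = winv s.
Proof. by move=> red_s; apply: reduce_id; rewrite -wlenE wlen_winv wlenE red_s size_winv. Qed.

Lemma lcancels_winv c s : lcancels c s = rcancels (winv s) (linv c).
Proof.
apply: eq_forallb => y; rewrite /= proj_rev proj_winv /winv revK; congr (_ ==> _).
case: (proj c.1 y s) => [|d l] //=; rewrite !(inj_eq (@Some_inj _)).
by rewrite (inj_eq (inv_inj linvK)).
Qed.

Lemma wlen_cons c s : reduce s = s -> wlen (c :: s) + 2 * lcancels c s = (size s).+1.
Proof.
move=> red_s; have -> : c :: s = winv (rcons (winv s) (linv c)).
  by rewrite /winv map_rcons rev_rcons /= linvK -/(winv (winv s)) winvK.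
by rewrite wlen_winv wlenE reduce_rcons reduce_winv // lcancels_winv size_push size_winv.
Qed.

(** * Conjugates and curvature *)

Lemma rcancels_linv r a : rcancels r a -> ~~ rcancels r (linv a).
Proof.
move/rcancelsP/(_ a.1 (negbT (adj_irr _))) => [t t_eq].
apply/negP => /rcancelsP/(_ a.1 (negbT (adj_irr _))) [t'].
by rewrite t_eq linvK => /rcons_inj [_ /eqP]; rewrite (negbTE (linv_neq a)).
Qed.

Lemma lcancels_push_excl r a : rcancels r a -> lcancels (linv a) (push r a) ->
  ~~ lcancels a (push r (linv a)).
Proof.
have naa : ~~ adj a.1 a.1 by rewrite adj_irr.
move=> ra /lcancelsP/(_ a.1 naa) [t t_eq]; apply/negP => /lcancelsP/(_ a.1 naa) [t'].
rewrite proj_push_rcons ?rcancels_linv // proj_rcons /= eqxx.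
rewrite (proj_push_cancel ra naa) t_eq linvK => -[/eqP].
by rewrite eq_sym (negbTE (linv_neq a)).
Qed.

Definition leads (r : word) (x : T) : Prop :=
  forall y, ~~ adj x y -> forall c, ohead (proj x y r) = Some c -> c.1 = x.

Lemma lcancels_push_leads r a : lcancels (linv a) (push r a) -> leads r a.1.
Proof.
move=> /lcancelsP la y ny c; have [t] := la y ny; rewrite linvK /=.
have [ra|nra] := boolP (rcancels r a).
  by rewrite (proj_push_cancel ra ny) => -> [<-].
rewrite proj_push_rcons // proj_rcons eqxx /=.
by case: (proj a.1 y r) => [|d l] //= [-> _] [<-].
Qed.

Lemma leads_commute r : (forall x, leads r x) ->
  forall c d : letter, d \in r -> d.1 = c.1 \/ adj d.1 c.1.
Proof.
move=> lr c d dr; have [|ndc] := eqVneq d.1 c.1; [by left | right].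
apply: contraNT ndc => ndc'.
have : d \in proj c.1 d.1 r by rewrite mem_filter eqxx orbT dr.
case E: (proj c.1 d.1 r) => [|e l] // _.
have ncd : ~~ adj c.1 d.1 by rewrite adj_sym.
have := lr d.1 c.1 ndc' e; rewrite proj_sym E => /(_ erefl) <-.
by have := lr c.1 d.1 ncd e; rewrite E => /(_ erefl) ->.
Qed.

Lemma req_letters_comm (c d : letter) : d.1 = c.1 \/ adj d.1 c.1 -> req [:: d; c] [:: c; d].
Proof.
case=> dc; last exact/req_step/(step_comm [::] [::] dc).
have [->|ndc] := eqVneq d c; first exact: req_refl.
have -> : d = linv c.
  by case: d c dc ndc => [x b] [y b'] /= <-; case: b b' => [] []; rewrite ?eqxx.
apply: (@req_trans _ [::]).
  by apply: req_step; have := step_cancel adj [::] [::] (linv c); rewrite linvK.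
exact/req_sym/req_step/(step_cancel adj [::] [::] c).
Qed.

Lemma req_central_word (r : word) :
  (forall c d : letter, d \in r -> d.1 = c.1 \/ adj d.1 c.1) ->
  forall w, req (r ++ w) (w ++ r).
Proof.
move=> r_comm; have comm_letter c : req (r ++ [:: c]) (c :: r).
  elim: r r_comm => [|d r IH] r_comm /=; first exact: req_refl.
  apply: (@req_trans _ (d :: c :: r)).
    by apply: (req_catl [:: d]); apply: IH => e d' d'r; apply: r_comm; rewrite inE d'r orbT.
  by apply: (@req_catr r [:: d; c] [:: c; d]); apply/req_letters_comm/r_comm; rewrite inE eqxx.
elim=> [|c w IH]; first by rewrite cats0; apply: req_refl.
rewrite -cat1s catA; apply: req_trans (req_catr w (comm_letter c)) _.
exact: (req_catl [:: c] IH).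
Qed.

Definition conjw (a : letter) (w : word) : word := [:: linv a] ++ w ++ [:: a].

Lemma wlen_conjw_push g a : wlen (conjw a g) = wlen (linv a :: push (reduce g) a).
Proof.
apply/wlen_req/(req_catl [:: linv a]).
apply: req_trans (req_catr [:: a] (req_sym (reduce_req g))) _.
by rewrite cats1; apply/req_sym/push_req.
Qed.

Lemma wlen_conjw_central g a : central adj g -> wlen (conjw a g) = wlen g.
Proof.
move=> cg; apply: wlen_req; apply: req_trans (req_catl [:: linv a] (cg [:: a])) _.
by apply: req_step; have := step_cancel adj [::] g (linv a); rewrite linvK.
Qed.

Lemma central_of_leads g : (forall x, leads (reduce g) x) -> central adj g.
Proof.
move=> lg w; have rg := reduce_req g.
apply: req_trans (req_catr w (req_sym rg)) _; apply: req_trans (req_catl w rg).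
exact/req_central_word/leads_commute.
Qed.

Lemma cancel_count_le2 (a1 a2 b1 b2 : bool) :
  (a1 -> ~~ b1) -> (a1 -> a2 -> ~~ b2) -> (b1 -> b2 -> ~~ a2) ->
  a1 + a2 + (b1 + b2) <= 2 /\ (a1 + a2 + (b1 + b2) = 2 -> a2 || b2).
Proof.
case: a1 a2 b1 b2 => [] [] [] [] h1 h2 h3; split=> //;
  first [by have := h1 isT | by have := h2 isT isT | by have := h3 isT isT].
Qed.

Lemma wlen_conjw_pair g a :
  2 * wlen g <= wlen (conjw a g) + wlen (conjw (linv a) g) /\
  (wlen (conjw a g) + wlen (conjw (linv a) g) = 2 * wlen g -> leads (reduce g) a.1).
Proof.
set r := reduce g; have red_r : reduce r = r := reduce_idem g.
have conj_len b : wlen (conjw b g) + 2 * (rcancels r b + lcancels (linv b) (push r b))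
    = (size r).+2.
  have := wlen_cons (linv b) (reduce_push b red_r); have := size_push r b.
  by rewrite wlen_conjw_push -/r; lia.
have excl_b := @lcancels_push_excl r (linv a); rewrite !linvK in excl_b.
have [le2 eq2] := cancel_count_le2 (@rcancels_linv r a) (@lcancels_push_excl r a) excl_b.
have := conj_len a; have := conj_len (linv a); rewrite linvK [wlen g]wlenE -/r => len_b len_a.
split=> [|E]; first by lia.
have /orP[] := eq2 (ltac:(lia)); first exact: lcancels_push_leads.
by move=> lb; apply: (@lcancels_push_leads r (linv a)); rewrite linvK.
Qed.

Definition conj_balanced (g : word) : bool :=
  [forall a, wlen (conjw a g) + wlen (conjw (linv a) g) == 2 * wlen g].

Lemma conj_balancedP g : reflect (central adj g) (conj_balanced g).
Proof.
apply: (iffP forallP) => [bal | cg a].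
  apply: central_of_leads => x; apply: (wlen_conjw_pair g (x, true)).2.
  exact/eqP/bal.
by rewrite !wlen_conjw_central // addnn -mul2n.
Qed.

Lemma sum_wlen_conjw g :
  #|{: letter}| * wlen g <= \sum_a wlen (conjw a g) ?= iff conj_balanced g.
Proof.
have [le eq] := leqif_sum (fun a (_ : true) => leqif_eq (wlen_conjw_pair g a).1).
have sum_linv : \sum_a wlen (conjw (linv a) g) = \sum_a wlen (conjw a g).
  by rewrite [RHS](reindex_inj (inv_inj linvK)).
have sum_pairs : \sum_a (wlen (conjw a g) + wlen (conjw (linv a) g))
    = 2 * \sum_a wlen (conjw a g) by rewrite big_split /= sum_linv addnn mul2n.
have sum_const : \sum_(a : letter) 2 * wlen g = 2 * (#|{: letter}| * wlen g).
  by rewrite sum_nat_const mulnCA.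
rewrite sum_pairs sum_const in le eq.
split; first by rewrite -(leq_pmul2l (ltn0Sn 1)).
rewrite -(eqn_pmul2l (ltn0Sn 1)) eq; apply: eq_forallb => a; exact: eq_sym.
Qed.

Lemma card_letter_gt0 g : 0 < wlen g -> 0 < #|{: letter}|.
Proof.
move=> /leq_trans/(_ (wlen_le (req_refl g))).
by case: g => // c _ _; apply/card_gt0P; exists c.
Qed.

Lemma kappa_le0 g (C : bool) : 0 < wlen g ->
  #|{: letter}| * wlen g <= \sum_a wlen (conjw a g) ?= iff C -> (kappa adj g <= 0 ?= iff C)%R.
Proof.
move=> n_gt0 [le eq]; have N_gt0 := card_letter_gt0 n_gt0.
set N := #|{: letter}| in N_gt0 le eq *; set S := \sum_a _ in le eq *.
have Nn_gt0 : (0 < (N * wlen g)%:R :> rat)%R by rewrite ltr0n muln_gt0 N_gt0.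
have -> : kappa adj g = (((N * wlen g)%:R - S%:R) / (N * wlen g)%:R)%R.
  rewrite /kappa /Av natr_sum natrM; field.
  by rewrite !pnatr_eq0 -!lt0n n_gt0 N_gt0.
split; first by rewrite pmulr_lle0 ?invr_gt0 // subr_le0 ler_nat.
by rewrite mulf_eq0 invr_eq0 (gt_eqF Nn_gt0) orbF subr_eq0 eqr_nat eq.
Qed.

End RAAG.

Local Open Scope ring_scope.

Theorem mainTheorem14 (T : finType) (adj : rel T)
  (adj_sym : symmetric adj) (adj_irr : irreflexive adj) (g : word T) :
  ~ raag_eq adj g [::] ->
  (kappa adj g = 0 <-> central adj g) /\ (~ central adj g -> kappa adj g < 0).
Proof.
move=> g_ne1; have n_gt0 := wlen_gt0 g_ne1.
have [k_le0 k_eq0] := kappa_le0 n_gt0 (sum_wlen_conjw adj_sym adj_irr g).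
have centralP := conj_balancedP adj_sym adj_irr g.
split=> [|not_central].
  split=> [/eqP|/centralP]; first by rewrite k_eq0 => /centralP.
  by rewrite -k_eq0 => /eqP.
by rewrite lt_neqAle k_le0 andbT k_eq0; apply/negP => /centralP.
Qed.
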